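(* Let $P$ be a poset, $Q$ a finite poset and $r \ge 2$ an integer. Then the symmetry quotient $P/(Q,r)$ is layer-preserving: for every equivalence class $E \in P/(Q,r)$ and every $e \in E$, \[ \ell_{P/(Q,r)}(E) = \ell_P(e). \] In particular $\ell(P) = \ell(P \oslash_r Q)$.
   Context: For a poset $X$, $\ell(X)$ is the cardinality of a longest chain in $X$; the layer of $a \in X$ is $\ell_X(a) = \ell(J^-(a))$, where $J^-(a) = \{c \in X : c \le a\}$. A subset $A$ of a poset $X$ is maximally ordered in $X$ if $|\{(a,b)\in A\times A : a<b\}|$ is maximal among all subsets of $X$ of cardinality $|A|$. For $\sigma \in \mathrm{Aut}(P)$ let $\Sigma(\sigma)=\{a\in P:\sigma(a)\neq a\}$. $(Q,r)$-generators: $\sigma \in \mathrm{Aut}(P)$ is a $(Q,r)$-generator if there exist subsets $S_0,\dots,S_{r-1}\subset\Sigma(\sigma)$, each isomorphic to $Q$, which are smallest maximally ordered subsets of $\Sigma(\sigma)$ with $\sigma(S_i)=S_{(i+1)\bmod r}$, $\ell(S_i)=\ell(\Sigma(\sigma))$ for all $i$, and $\bigcup_i S_i=\Sigma(\sigma)$. Any two distinct $S_i,S_j$ are called $(Q,r)$-symmetric subsets. $(Q,r)$-symmetric elements: $a,b\in P$ are $(Q,r,0)$-symmetric if $a=b$; $(Q,r,1)$-symmetric if there are $(Q,r)$-symmetric subsets $A,B$ with $(Q,r)$-generator $\sigma$ such that $a\in A$ and $b=\sigma^q(a)\in B$ for some $1\le q<r$; for $n\ge2$, $(Q,r,n)$-symmetric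 if they are not $(Q,r,j)$-symmetric for any $j<n$ but there exist $c\in P$ and $j<n$ with $a$ $(Q,r,j)$-symmetric to $c$ and $c$ $(Q,r,n-j)$-symmetric to $b$. Elements are $(Q,r)$-symmetric if they are $(Q,r,n)$-symmetric for some $n\ge0$; this is an equivalence relation. $P/(Q,r)$ is the set of its equivalence classes, ordered by $E\le F$ iff there exist $e\in E$, $f\in F$ with $e\le f$. The retract $P\oslash_r Q$ is this quotient poset (up to isomorphism). *)

From Stdlib Require Import Relations.
From mathcomp Require Import all_boot all_order fingroup perm.
From mathcomp Require Import boolp.

Set Implicit Arguments.
Unset Strict Implicit.
Unset Printing Implicit Defensive.

Import Order.Theory.
Local Open Scope order_scope.

Definition is_chain (T : finType) (R : rel T) (C : {set T}) : bool :=
  [forall x in C, forall y in C, R x y || R y x].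

Definition ell (T : finType) (R : rel T) (X : {set T}) : nat :=
  \max_(C : {set T} | (C \subset X) && is_chain R C) #|C|.

Section PosetDefs.
Context {d : Order.disp_t} (P : finPOrderType d).

Definition le_P : rel P := fun a b => a <= b.

Definition Jdown (a : P) : {set P} := [set c | c <= a].

Definition layer (a : P) : nat := ell le_P (Jdown a).

Definition nord (A : {set P}) : nat :=
  #|[set p : P * P | [&& p.1 \in A, p.2 \in A & p.1 < p.2]]|.

Definition max_ordered (X A : {set P}) : Prop :=
  A \subset X /\ forall B : {set P}, B \subset X -> #|B| = #|A| -> (nord B <= nord A)%N.

Definition is_aut (s : {perm P}) : Prop := forall a b : P, (s a <= s b) = (a <= b).

Definition Sigma (s : {perm P}) : {set P} := [set a | s a != a].

Definition iso_to {d' : Order.disp_t} (Q : finPOrderType d') (S : {set P}) : Prop :=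
  exists f : Q -> P,
    [/\ injective f, f @: [set: Q] = S & forall x y : Q, (f x <= f y) = (x <= y)].

Definition smallest_max_ordered (s : {perm P}) (S : {set P}) : Prop :=
  [/\ max_ordered (Sigma s) S, ell le_P S = ell le_P (Sigma s) &
      forall T : {set P}, max_ordered (Sigma s) T -> ell le_P T = ell le_P (Sigma s) ->
        (#|S| <= #|T|)%N ].

Definition generator_family {d' : Order.disp_t} (Q : finPOrderType d') (r : nat)
    (s : {perm P}) (S : nat -> {set P}) : Prop :=
  [/\ is_aut s,
      (forall i, (i < r)%N -> S i \subset Sigma s /\ iso_to Q (S i)),
      (forall i, (i < r)%N -> smallest_max_ordered s (S i)),
      (forall i, (i < r)%N -> s @: S i = S ((i.+1) %% r)%N) &
      \bigcup_(i < r) S i = Sigma s].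

Definition is_generator {d' : Order.disp_t} (Q : finPOrderType d') (r : nat)
    (s : {perm P}) : Prop :=
  exists S, generator_family Q r s S.

Definition sym1 {d' : Order.disp_t} (Q : finPOrderType d') (r : nat) (a b : P) : Prop :=
  exists (s : {perm P}) (S : nat -> {set P}) (i j q : nat),
    [/\ generator_family Q r s S, [&& i < r, j < r & S i != S j]%N,
        a \in S i,
        (1 <= q < r)%N &
        b = (s ^+ q)%g a /\ b \in S j].

(* (Q,r)-symmetry: union over n of the (Q,r,n)-symmetries, i.e. the
   reflexive-transitive closure of (Q,r,1)-symmetry *)
Definition symQ {d' : Order.disp_t} (Q : finPOrderType d') (r : nat) : relation P :=
  clos_refl_trans P (sym1 Q r).

Definition sym_class {d' : Order.disp_t} (Q : finPOrderType d') (r : nat) (a : P)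
  : {set P} := [set b | `[< symQ Q r a b >]].

Definition quot {d' : Order.disp_t} (Q : finPOrderType d') (r : nat) : {set {set P}} :=
  [set sym_class Q r a | a : P].

Definition le_quot (E F : {set P}) : bool := [exists e in E, exists f in F, e <= f].

Definition layerQ {d' : Order.disp_t} (Q : finPOrderType d') (r : nat) (E : {set P})
  : nat := ell le_quot [set F in quot Q r | le_quot F E].

End PosetDefs.

(* Every (Q,r,1)-symmetry moves an element by a power of an automorphism of P,
   so symmetric elements have the same layer.  The closure is symmetric: for a
   generator s, a single step x |-> s x is itself a (Q,r,1)-symmetry (this is
   where r >= 2 is used), and further powers of s bring s^q a back to a.  Hence
   every class of P/(Q,r) lies in a single layer of P.  Comparable elements of
   the same layer are equal, so the class map is injective on chains of P, and
   the layer of a class is injective on chains of P/(Q,r).  Pushing a longest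
   chain below e forward, and labelling a longest chain below E by layers in
   [1, layer e], give the two inequalities. *)
From mathcomp Require Import all_boot all_order fingroup perm.
From mathcomp Require Import boolp.
From Stdlib Require Import Relations.

Set Implicit Arguments.
Unset Strict Implicit.
Unset Printing Implicit Defensive.

Import Order.Theory.

Lemma is_chainP (T : finType) (R : rel T) (C : {set T}) :
  reflect {in C &, forall x y, R x y || R y x} (is_chain R C).
Proof.
apply: (iffP forall_inP) => [chC x y xC yC | chC x xC].
  exact: (forall_inP (chC x xC)).
by apply/forall_inP => y; apply: chC.
Qed.

Lemma is_chain_imset (T U : finType) (R : rel T) (R' : rel U) (f : T -> U)
    (C : {set T}) :
  {in C &, forall x y, R x y -> R' (f x) (f y)} ->
  is_chain R C -> is_chain R' (f @: C).
Proof.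
move=> fR /is_chainP chC; apply/is_chainP => _ _ /imsetP[x xC ->] /imsetP[y yC ->].
by case/orP: (chC x y xC yC) => [/(fR x y xC yC) | /(fR y x yC xC)] ->; rewrite ?orbT.
Qed.

Lemma card_le_ell (T : finType) (R : rel T) (X C : {set T}) :
  C \subset X -> is_chain R C -> #|C| <= ell R X.
Proof.
move=> sCX chC.
by apply: (leq_bigmax_cond (F := fun C : {set T} => #|C|)); rewrite sCX.
Qed.

Lemma ell_chain (T : finType) (R : rel T) (X : {set T}) :
  exists2 C : {set T}, (C \subset X) && is_chain R C & #|C| = ell R X.
Proof.
have [|C chC maxC] :=
  @eq_bigmax_cond _ (fun C : {set T} => (C \subset X) && is_chain R C) (fun C => #|C|).
  apply/card_gt0P; exists set0; rewrite unfold_in /= sub0set.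
  by apply/is_chainP => x; rewrite inE.
by exists C; last exact: esym maxC.
Qed.

Lemma ell_subset (T : finType) (R : rel T) (X Y : {set T}) :
  X \subset Y -> ell R X <= ell R Y.
Proof.
move=> sXY; have [C /andP[sCX chC] <-] := ell_chain R X.
exact: card_le_ell (subset_trans sCX sXY) chC.
Qed.

Lemma card_le_inj_label (T : finType) (A : {set T}) (h : T -> nat) (n : nat) :
  {in A &, injective h} -> (forall x, x \in A -> 0 < h x <= n) -> #|A| <= n.
Proof.
move=> hinj hA; rewrite cardE -(size_map h) -(size_iota 1 n).
apply: uniq_leq_size => [|_ /mapP[x xA ->]].
  by rewrite map_inj_in_uniq ?enum_uniq // => x y; rewrite !mem_enum; apply: hinj.
by rewrite mem_iota add1n ltnS; apply: hA; rewrite -mem_enum.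
Qed.

Lemma rotation_const (T : Type) (g : T -> T) (S : nat -> T) (r k : nat) :
  (forall i, i < r -> g (S i) = S (i.+1 %% r)) -> k < r -> S (k.+1 %% r) = S k ->
  forall i, i < r -> S i = S k.
Proof.
move=> rotS kr fixk.
have Sk m : S ((k + m) %% r) = S k.
  elim: m => [|m IHm]; first by rewrite addn0 modn_small.
  have kmr : (k + m) %% r < r by rewrite ltn_mod (leq_ltn_trans _ kr).
  rewrite addnS -addn1 -modnDml addn1 -rotS // IHm rotS //.
move=> i ir; rewrite -(Sk (i + r - k)) addnBA ?(leq_trans (ltnW kr)) ?leq_addl //.
by rewrite addnC addnK modnDr modn_small.
Qed.

Section Layers.
Local Open Scope order_scope.
Variables (d : Order.disp_t) (P : finPOrderType d).
Implicit Types (a b : P) (s : {perm P}).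

Lemma layer_gt0 a : (0 < layer a)%N.
Proof.
rewrite -(cards1 a); apply: card_le_ell; first by rewrite sub1set inE.
by apply/is_chainP => x y; rewrite !inE => /eqP-> /eqP->; rewrite /le_P lexx.
Qed.

Lemma le_layer a b : a <= b -> (layer a <= layer b)%N.
Proof.
by move=> ab; apply: ell_subset; apply/subsetP => x; rewrite !inE => /le_trans; apply.
Qed.

Lemma lt_layer a b : a < b -> (layer a < layer b)%N.
Proof.
move=> ab; rewrite /layer.
have [C /andP[sC /is_chainP chC] <-] := ell_chain (@le_P d P) (Jdown a).
have Cb x : x \in C -> x < b by move/(subsetP sC); rewrite inE => /le_lt_trans; apply.
have bC : b \notin C by apply/negP => /Cb; rewrite ltxx.
have -> : #|C|.+1 = #|b |: C| by rewrite cardsU1 bC.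
apply: card_le_ell.
  by apply/subsetP => x; rewrite !inE => /predU1P[-> // | /Cb/ltW].
apply/is_chainP => x y; rewrite !inE /le_P.
by case/predU1P=> [->|xC] /predU1P[->|yC];
  rewrite ?lexx ?(ltW (Cb _ xC)) ?(ltW (Cb _ yC)) ?orbT //; apply: chC.
Qed.

Lemma le_eq_layer a b : a <= b -> layer a = layer b -> a = b.
Proof.
move=> ab eab; case: (eqVneq a b) => // neab.
by have := @lt_layer a b; rewrite lt_def (eq_sym b) neab ab eab ltnn => /(_ isT).
Qed.

Lemma is_autV s : is_aut s -> is_aut s^-1%g.
Proof. by move=> autS x y; rewrite -[LHS]autS !permKV. Qed.

Lemma is_aut_expg s n : is_aut s -> is_aut (s ^+ n)%g.
Proof.
move=> autS; elim: n => [|n IHn] x y; first by rewrite expg0 !perm1.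
by rewrite expgSr !permM autS IHn.
Qed.

Lemma layer_aut s a : is_aut s -> layer (s a) = layer a.
Proof.
have le_aut t b : is_aut t -> (layer b <= layer (t b))%N.
  move=> autT; rewrite /layer.
  have [C /andP[sC chC] <-] := ell_chain (@le_P d P) (Jdown b).
  rewrite -(card_imset C (@perm_inj _ t)); apply: card_le_ell.
    by apply/subsetP => _ /imsetP[x xC ->]; move/(subsetP sC): xC; rewrite !inE autT.
  by apply: is_chain_imset chC => x y _ _; rewrite /le_P autT.
move=> autS; apply/eqP; rewrite eqn_leq le_aut // andbT.
by have := le_aut _ (s a) (is_autV autS); rewrite permK.
Qed.

End Layers.

Section Symmetry.
Variables (d : Order.disp_t) (P : finPOrderType d).
Variables (d' : Order.disp_t) (Q : finPOrderType d') (r : nat).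
Implicit Types (a b x : P) (s : {perm P}) (S : nat -> {set P}).

Local Notation cls := (sym_class Q r).

Lemma sym1_layer a b : sym1 Q r a b -> layer a = layer b.
Proof.
case=> s [S [i [j [q [[autS _ _ _ _] _ _ _ [-> _]]]]]].
by rewrite layer_aut //; apply: is_aut_expg.
Qed.

Lemma symQ_layer a b : symQ Q r a b -> layer a = layer b.
Proof. by elim=> [x y /sym1_layer | | x y z _ -> _ ->]. Qed.

Hypothesis r_gt1 : (1 < r)%N.

Lemma sym1_succ s S i j k x :
  generator_family Q r s S -> [&& i < r, j < r & S i != S j]%N ->
  (k < r)%N -> x \in S k -> sym1 Q r x (s x) /\ s x \in S (k.+1 %% r).
Proof.
move=> genS /and3P[ir jr neSij] kr xSk.
have [_ _ _ rotS _] := genS.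
have sxS : s x \in S (k.+1 %% r) by rewrite -rotS // imset_f.
split=> //; exists s, S, k, (k.+1 %% r), 1%N; split=> //.
rewrite kr ltn_mod (leq_ltn_trans _ kr) //=; apply/eqP => fixk.
(* a generator family with two consecutive equal members is constant *)
have Sconst := @rotation_const _ (fun A : {set P} => s @: A) S r k rotS kr (esym fixk).
by move/eqP: neSij; apply; rewrite !Sconst.
Qed.

Lemma symQ_expg s S i j k x m :
  generator_family Q r s S -> [&& i < r, j < r & S i != S j]%N ->
  (k < r)%N -> x \in S k -> symQ Q r x ((s ^+ m)%g x).
Proof.
move=> genS neS; elim: m k x => [|m IHm] k x kr xSk.
  by rewrite expg0 perm1; apply: rt_refl.
have [sym_xsx sxS] := sym1_succ genS neS kr xSk.
rewrite expgS permM; apply: rt_trans (rt_step _ _ _ _ sym_xsx) _.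
by apply: IHm sxS; rewrite ltn_mod (leq_ltn_trans _ kr).
Qed.

Lemma sym1_sym a b : sym1 Q r a b -> symQ Q r b a.
Proof.
case=> s [S [i [j [q [genS neS _ _ [-> bSj]]]]]].
have /and3P[_ jr _] := neS.
have a_orbit : a = ((s ^+ (q * #[s].-1)) ((s ^+ q) a))%g.
  rewrite -permM -expgD -{1}(muln1 q) -mulnDr add1n prednK ?order_gt0 //.
  by rewrite mulnC expgM expg_order expg1n perm1.
by rewrite {2}a_orbit; apply: symQ_expg genS neS jr bSj.
Qed.

Lemma symQ_sym a b : symQ Q r a b -> symQ Q r b a.
Proof.
elim=> [x y /sym1_sym // | x | x y z _ yx _ zy]; first exact: rt_refl.
exact: rt_trans zy yx.
Qed.

Lemma sym_classP a b : reflect (symQ Q r a b) (b \in cls a).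
Proof. by rewrite inE; apply: asboolP. Qed.

Lemma sym_class_refl a : a \in cls a.
Proof. by apply/sym_classP; apply: rt_refl. Qed.

Lemma sym_class_eq a b : b \in cls a -> cls b = cls a.
Proof.
move/sym_classP => ab; apply/setP => x.
apply/sym_classP/sym_classP => [bx | ax]; first exact: rt_trans ab bx.
exact: rt_trans (symQ_sym ab) ax.
Qed.

Lemma quot_sym_class F x : F \in quot P Q r -> x \in F -> F = cls x.
Proof. by case/imsetP => a _ -> /sym_class_eq. Qed.

Lemma quot_layer F x y : F \in quot P Q r -> x \in F -> y \in F -> layer x = layer y.
Proof.
by move=> FQ xF; rewrite (quot_sym_class FQ xF) => /sym_classP; apply: symQ_layer.
Qed.

End Symmetry.

Section Quotient.
Local Open Scope order_scope.
Variables (d : Order.disp_t) (P : finPOrderType d).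
Variables (d' : Order.disp_t) (Q : finPOrderType d') (r : nat).
Hypothesis r_gt1 : (1 < r)%N.
Implicit Types (a b : P) (F G : {set P}).

Local Notation cls := (sym_class Q r).

Definition class_layer F : nat := \max_(x in F) layer x.

Lemma class_layerE F x : F \in quot P Q r -> x \in F -> class_layer F = layer x.
Proof.
move=> FQ xF; apply/eqP; rewrite eqn_leq /class_layer (leq_bigmax_cond _ xF) andbT.
by apply/bigmax_leqP => y yF; rewrite (quot_layer r_gt1 FQ yF xF).
Qed.

Lemma le_quot_sym_class a b : a <= b -> le_quot (cls a) (cls b).
Proof.
move=> ab; apply/exists_inP; exists a; first exact: sym_class_refl.
by apply/exists_inP; exists b; first exact: sym_class_refl.
Qed.

Lemma sym_class_inj_chain (C : {set P}) :
  is_chain (@le_P d P) C -> {in C &, injective cls}.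
Proof.
move=> /is_chainP chC a b aC bC eab.
have lab : layer a = layer b.
  by apply/(symQ_layer (Q := Q) (r := r))/sym_classP; rewrite eab sym_class_refl.
by case/orP: (chC a b aC bC) => /le_eq_layer; [apply | move=> ba; rewrite ba].
Qed.

Lemma class_layer_inj_chain (K : {set {set P}}) :
  K \subset quot P Q r -> is_chain (@le_quot d P) K -> {in K &, injective class_layer}.
Proof.
have le_quot_eq F G : F \in quot P Q r -> G \in quot P Q r -> le_quot F G ->
    class_layer F = class_layer G -> F = G.
  move=> FQ GQ /exists_inP[f fF /exists_inP[g gG fg]].
  rewrite (class_layerE FQ fF) (class_layerE GQ gG) => /(le_eq_layer fg) efg.
  by rewrite (quot_sym_class r_gt1 FQ fF) (quot_sym_class r_gt1 GQ gG) efg.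
move=> /subsetP sKQ /is_chainP chK F G FK GK eFG.
have [FQ GQ] := (sKQ F FK, sKQ G GK).
by case/orP: (chK F G FK GK) => /le_quot_eq; [apply | move=> GF; rewrite GF].
Qed.

Lemma ell_le_ell_quot (X : {set P}) (K : {set {set P}}) :
  (forall a, a \in X -> cls a \in K) -> (ell (@le_P d P) X <= ell (@le_quot d P) K)%N.
Proof.
move=> XK; have [C /andP[sCX chC] <-] := ell_chain (@le_P d P) X.
rewrite -(card_in_imset (sym_class_inj_chain chC)); apply: card_le_ell.
  by apply/subsetP => _ /imsetP[a aC ->]; apply/XK/(subsetP sCX).
by apply: is_chain_imset chC => a b _ _; apply: le_quot_sym_class.
Qed.

Lemma ell_quot_le (K : {set {set P}}) n :
  K \subset quot P Q r -> (forall F, F \in K -> exists2 x, x \in F & (layer x <= n)%N) ->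
  (ell (@le_quot d P) K <= n)%N.
Proof.
move=> sKQ Kn; have [L /andP[sLK chL] <-] := ell_chain (@le_quot d P) K.
have sLQ := subset_trans sLK sKQ.
apply: (card_le_inj_label (class_layer_inj_chain sLQ chL)) => F FL.
have [x xF xn] := Kn F (subsetP sLK F FL).
by rewrite (class_layerE (subsetP sLQ F FL) xF) layer_gt0.
Qed.

End Quotient.

Theorem mainTheorem3 (d : Order.disp_t) (P : finPOrderType d)
    (d' : Order.disp_t) (Q : finPOrderType d') (r : nat) :
  (2 <= r)%N ->
  (forall E : {set P}, E \in quot P Q r ->
     forall e : P, e \in E -> layerQ Q r E = layer e)
  /\ ell (@le_P d P) [set: P] = ell (@le_quot d P) (quot P Q r).
Proof.
move=> r_gt1; split=> [E EQ e eE | ].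
  apply/eqP; rewrite eqn_leq; apply/andP; split.
    apply: (ell_quot_le (Q := Q) r_gt1) => [|F].
      by apply/subsetP => F; rewrite inE => /andP[].
    rewrite inE => /andP[_ /exists_inP[f fF /exists_inP[g gE fg]]].
    by exists f; rewrite // (quot_layer r_gt1 EQ eE gE) le_layer.
  apply: (ell_le_ell_quot (Q := Q) (r := r)) => c; rewrite !inE => ce.
  by rewrite imset_f //= (quot_sym_class r_gt1 EQ eE) le_quot_sym_class.
apply/eqP; rewrite eqn_leq; apply/andP; split.
  by apply: (ell_le_ell_quot (Q := Q) (r := r)) => c _; apply: imset_f.
apply: (ell_quot_le r_gt1) => // F /imsetP[a _ ->].
by exists a; [apply: sym_class_refl | apply/ell_subset/subsetT].
Qed.
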